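(* Let $l,n$ be positive integers, $\mathbf{x}_1,\dots,\mathbf{x}_l\in\mathbb{R}^n$, $y_1,\dots,y_l\in\mathbb{R}$, $a_1,\dots,a_l,b_1,\dots,b_l\in\mathbb{R}$. Let $\varphi:\mathbb{R}\to[0,\infty)$ be nonconstant, continuous and sublinear, with $\varphi^*=\iota_{[\alpha,\beta]}$, $\alpha<\beta$. Let $\mathbf Z\in\mathbb{R}^{l\times n}$ have $i$-th row $a_i\mathbf x_i^T$, $\bar{\mathbf y}=(b_1y_1,\dots,b_ly_l)^T$, and for $C>0$ let $\theta^*(C)$ denote an optimal solution of the dual problem $$\min_{\theta\in[\alpha,\beta]^l}\ \tfrac{C}{2}\|\mathbf Z^T\theta\|^2-\langle\bar{\mathbf y},\theta\rangle.$$ Suppose $\theta^*(C_0)$ is given for some $C_0>0$, and let $C>C_0$. If for some index $i$ $$\tfrac{C+C_0}{2}\langle\mathbf Z^T\theta^*(C_0),a_i\mathbf x_i\rangle-\tfrac{C-C_0}{2}\|\mathbf Z^T\theta^*(C_0)\|\,\|a_i\mathbf x_i\|>b_iy_i,$$ then $[\theta^*(C)]_i=\alpha$, i.e., $i\in\mathcal R$. Similarly, if $$\tfrac{C+C_0}{2}\langle\mathbf Z^T\theta^*(C_0),a_i\mathbf x_i\rangle+\tfrac{C-C_0}{2}\|\mathbf Z^T\theta^*(C_0)\|\,\|a_i\mathbf x_i\|<b_iy_i,$$ then $[\theta^*(C)]_i=\beta$, i.e., $i\in\mathcal L$.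
   Context: This dual corresponds to the primal problem $\min_{\mathbf w\in\mathbb{R}^n}\frac12\|\mathbf w\|^2+C\sum_{i=1}^l\varphi(\mathbf w^T(a_i\mathbf x_i)+b_iy_i)$, whose unique optimal solution $\mathbf w^*(C)$ satisfies $\mathbf w^*(C)=-C\mathbf Z^T\theta^*(C)$. Sublinear means convex and $\varphi(tx)=t\varphi(x)$ for $t>0$; $\varphi^*(s)=\sup_t(st-\varphi(t))$ and $\iota_{[\alpha,\beta]}$ is $0$ on $[\alpha,\beta]$ and $+\infty$ elsewhere. The index sets are $\mathcal R=\{i:-\langle\mathbf w^*(C),a_i\mathbf x_i\rangle>b_iy_i\}$ and $\mathcal L=\{i:-\langle\mathbf w^*(C),a_i\mathbf x_i\rangle<b_iy_i\}$. *)

From HB Require Import structures.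
From mathcomp Require Import all_boot all_order all_algebra.
From mathcomp Require Import all_classical all_reals all_analysis.
Set Implicit Arguments. Unset Strict Implicit. Unset Printing Implicit Defensive.
Import Order.TTheory GRing.Theory Num.Theory.
Import numFieldNormedType.Exports.
Local Open Scope ring_scope.

Section Defs.
Variable R : realType.

Definition dotv (n : nat) (u v : 'cV[R]_n) : R := \sum_(j < n) u j 0 * v j 0.
Definition normv (n : nat) (u : 'cV[R]_n) : R := Num.sqrt (dotv u u).

Definition convex_fun (phi : R -> R) : Prop :=
  forall x y (t : R), 0 <= t -> t <= 1 ->
    phi (t * x + (1 - t) * y) <= t * phi x + (1 - t) * phi y.
Definition sublinear (phi : R -> R) : Prop :=
  convex_fun phi /\ forall (t x : R), 0 < t -> phi (t * x) = t * phi x.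

(* phi^*(s) = sup_t (s t - phi t) equals iota_[alpha,beta](s):
   the supremum is 0 on [alpha,beta] and +oo outside. *)
Definition conj_is_indicator (phi : R -> R) (alpha beta : R) : Prop :=
  forall s : R,
    ((alpha <= s <= beta) ->
       (forall t, s * t - phi t <= 0) /\
       (forall e : R, 0 < e -> exists t, - e < s * t - phi t)) /\
    (~ (alpha <= s <= beta) -> forall M : R, exists t, M < s * t - phi t).

Definition Zmat (l n : nat) (a : 'I_l -> R) (x : 'I_l -> 'cV[R]_n) : 'M[R]_(l, n) :=
  \matrix_(i < l, j < n) (a i * x i j 0).

Definition ybar (l : nat) (b y : 'I_l -> R) : 'cV[R]_l := \col_(i < l) (b i * y i).

Definition dual_feasible (l : nat) (alpha beta : R) (theta : 'cV[R]_l) : Prop :=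
  forall i : 'I_l, alpha <= theta i 0 <= beta.

Definition dual_obj (l n : nat) (Z : 'M[R]_(l, n)) (yb : 'cV[R]_l) (C : R)
    (theta : 'cV[R]_l) : R :=
  C / 2 * (normv (Z^T *m theta)) ^+ 2 - dotv yb theta.

Definition dual_optimal (l n : nat) (Z : 'M[R]_(l, n)) (yb : 'cV[R]_l)
    (alpha beta C : R) (theta : 'cV[R]_l) : Prop :=
  dual_feasible alpha beta theta /\
  forall theta' : 'cV[R]_l, dual_feasible alpha beta theta' ->
    dual_obj Z yb C theta <= dual_obj Z yb C theta'.

End Defs.

From HB Require Import structures.
From mathcomp Require Import all_boot all_order all_algebra.
From mathcomp Require Import all_classical all_reals all_analysis.
Import Order.TTheory GRing.Theory Num.Theory.
Import numFieldNormedType.Exports.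
From mathcomp Require Import ring lra.
Local Open Scope ring_scope.

(* Adding the first-order optimality conditions of the dual at C and at C0,
   each tested against the other optimum, confines C Z^T theta*(C) to the ball
   of centre (C + C0)/2 Z^T theta*(C0) and radius (C - C0)/2 |Z^T theta*(C0)|.
   By Cauchy-Schwarz this bounds the i-th partial derivative
   C <Z^T theta*(C), a_i x_i> - b_i y_i of the dual objective at theta*(C) by
   the screening quantities; once its sign is known, optimality in the i-th
   coordinate alone forces theta*(C)_i to the matching end of [alpha, beta]. *)

Set Implicit Arguments.
Unset Strict Implicit.

Lemma quadratic_ge0_discr (R : realType) (A B c : R) :
  0 <= A -> (forall t, 0 <= A * t ^+ 2 + 2 * B * t + c) -> B ^+ 2 <= A * c.
Proof.
move=> A_ge0 q_ge0; have [A_gt0|A_le0] := ltrP 0 A.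
  have := q_ge0 (- B / A).
  have -> : A * (- B / A) ^+ 2 + 2 * B * (- B / A) + c = c - B ^+ 2 / A.
    by field; rewrite gt_eqF.
  by rewrite subr_ge0 ler_pdivrMr // mulrC.
have A0 : A = 0 by lra.
have [->|B_neq0] := eqVneq B 0; first by rewrite A0 mul0r expr2 mul0r.
have := q_ge0 (- (c + 1) / (2 * B)).
have -> : A * (- (c + 1) / (2 * B)) ^+ 2 + 2 * B * (- (c + 1) / (2 * B)) + c
          = -1 by rewrite A0; field; rewrite ?pnatr_eq0 ?B_neq0.
by rewrite oppr_ge0 ler10.
Qed.

Lemma ge0_first_order (R : realType) (g K : R) : 0 <= K ->
  (forall t, 0 < t -> t <= 1 -> 0 <= t * g + t ^+ 2 * K) -> 0 <= g.
Proof.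
move=> K_ge0 small_ge0; rewrite leNgt; apply/negP => g_lt0.
have Kg_gt0 : 0 < K - g by lra.
pose t := - g / (K - g).
have t_gt0 : 0 < t by rewrite divr_gt0 // oppr_gt0.
have t_le1 : t <= 1 by rewrite ler_pdivrMr // mul1r; lra.
have : 0 <= t * (g + t * K) by rewrite mulrDr mulrA -expr2; exact: small_ge0.
rewrite pmulr_rge0 //.
have -> : g + t * K = - (g ^+ 2 / (K - g)) by rewrite /t; field; rewrite gt_eqF.
by rewrite oppr_ge0 leNgt divr_gt0 // expr2 nmulr_rgt0.
Qed.

Section InnerProduct.
Variable R : realType.
Implicit Types (m : nat) (k : R).

Lemma dotvC m (u v : 'cV[R]_m) : dotv u v = dotv v u.
Proof. by apply: eq_bigr => j _; rewrite mulrC. Qed.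

Lemma dotvDl m (u v w : 'cV[R]_m) : dotv (u + v) w = dotv u w + dotv v w.
Proof. by rewrite /dotv -big_split; apply: eq_bigr => j _; rewrite mxE mulrDl. Qed.

Lemma dotvZl m k (u w : 'cV[R]_m) : dotv (k *: u) w = k * dotv u w.
Proof. by rewrite /dotv mulr_sumr; apply: eq_bigr => j _; rewrite mxE mulrA. Qed.

Lemma dotvNl m (u w : 'cV[R]_m) : dotv (- u) w = - dotv u w.
Proof. by rewrite -scaleN1r dotvZl mulN1r. Qed.

Lemma dotvBl m (u v w : 'cV[R]_m) : dotv (u - v) w = dotv u w - dotv v w.
Proof. by rewrite dotvDl dotvNl. Qed.

Lemma dotvDr m (u v w : 'cV[R]_m) : dotv w (u + v) = dotv w u + dotv w v.
Proof. by rewrite dotvC dotvDl !(dotvC w). Qed.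

Lemma dotvZr m k (u w : 'cV[R]_m) : dotv w (k *: u) = k * dotv w u.
Proof. by rewrite dotvC dotvZl dotvC. Qed.

Lemma dotvBr m (u v w : 'cV[R]_m) : dotv w (u - v) = dotv w u - dotv w v.
Proof. by rewrite dotvC dotvBl !(dotvC w). Qed.

Lemma dotv_delta m (u : 'cV[R]_m) i : dotv u (delta_mx i 0) = u i 0.
Proof.
rewrite /dotv (bigD1 i) //= big1 => [|j ji]; first by rewrite !mxE !eqxx mulr1 addr0.
by rewrite !mxE (negbTE ji) mulr0.
Qed.

Lemma dotvv_ge0 m (u : 'cV[R]_m) : 0 <= dotv u u.
Proof. by apply: sumr_ge0 => j _; rewrite -expr2 sqr_ge0. Qed.

Lemma normv_ge0 m (u : 'cV[R]_m) : 0 <= normv u.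
Proof. exact: sqrtr_ge0. Qed.

Lemma normv_sqr m (u : 'cV[R]_m) : normv u ^+ 2 = dotv u u.
Proof. by rewrite sqr_sqrtr // dotvv_ge0. Qed.

Lemma ler_abs_dotv m (u w : 'cV[R]_m) : `|dotv u w| <= normv u * normv w.
Proof.
have cs : dotv u w ^+ 2 <= dotv u u * dotv w w.
  apply: quadratic_ge0_discr (dotvv_ge0 u) _ => t.
  have := dotvv_ge0 (t *: u + w).
  by rewrite !(dotvDl, dotvDr, dotvZl, dotvZr) (dotvC w u); nra.
rewrite /normv -sqrtrM ?dotvv_ge0 // -sqrtr_sqr.
by rewrite ler_sqrt // mulr_ge0 ?dotvv_ge0.
Qed.

Lemma dotv_ball m (p c w : 'cV[R]_m) (r : R) :
  normv (p - c) <= r -> `|dotv p w - dotv c w| <= r * normv w.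
Proof.
move=> pc_le; rewrite -dotvBl (le_trans (ler_abs_dotv _ _)) //.
by rewrite ler_wpM2r ?normv_ge0.
Qed.

End InnerProduct.

Section DualOptimality.
Variables (R : realType) (l n : nat) (Z : 'M[R]_(l, n)) (yb : 'cV[R]_l).
Variables (alpha beta : R).

Lemma dual_feasible_segment (th th' : 'cV[R]_l) (t : R) :
  dual_feasible alpha beta th -> dual_feasible alpha beta th' ->
  0 <= t <= 1 -> dual_feasible alpha beta (th + t *: (th' - th)).
Proof.
move=> fe fe' /andP[t_ge0 t_le1] j; rewrite !mxE.
by move: (fe j) (fe' j) => /andP[? ?] /andP[? ?]; apply/andP; split; nra.
Qed.

Lemma dual_optimal_variational (C : R) (th th' : 'cV[R]_l) : 0 < C ->
  dual_optimal Z yb alpha beta C th -> dual_feasible alpha beta th' ->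
  0 <= C * dotv (Z^T *m th) (Z^T *m (th' - th)) - dotv yb (th' - th).
Proof.
move=> C_gt0 [fe opt] fe'.
set v := Z^T *m th; set w := Z^T *m (th' - th).
apply: (@ge0_first_order _ _ (C / 2 * dotv w w)).
  by rewrite mulr_ge0 ?dotvv_ge0 // divr_ge0 // ltW.
move=> t t_gt0 t_le1.
have t01 : 0 <= t <= 1 by rewrite t_le1 ltW.
have := opt _ (dual_feasible_segment fe fe' t01).
rewrite /dual_obj !normv_sqr mulmxDr -scalemxAr -/v -/w.
by rewrite !(dotvDl, dotvDr, dotvZl, dotvZr) (dotvC w v); nra.
Qed.

Lemma dual_optimal_coord (C c : R) (th : 'cV[R]_l) (i : 'I_l) : 0 < C ->
  dual_optimal Z yb alpha beta C th -> alpha <= c <= beta ->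
  0 <= (c - th i 0) * (C * dotv (Z^T *m th) (Z^T *m delta_mx i 0) - yb i 0).
Proof.
move=> C_gt0 opt c_in; set th' := th + (c - th i 0) *: delta_mx i 0.
have fe' : dual_feasible alpha beta th'.
  move=> j; rewrite !mxE; have [->|ji] := eqVneq j i.
    by rewrite mulr1 addrC subrK.
  by rewrite mulr0 addr0; apply: opt.1.
have dth : th' - th = (c - th i 0) *: delta_mx i 0 by rewrite addrAC subrr add0r.
have := dual_optimal_variational C_gt0 opt fe'.
rewrite dth -scalemxAr !dotvZr dotv_delta.
by rewrite mulrCA -mulrBr.
Qed.

Lemma dual_optimal_at_lower (C : R) (th : 'cV[R]_l) (i : 'I_l) :
  0 < C -> alpha <= beta -> dual_optimal Z yb alpha beta C th ->
  yb i 0 < C * dotv (Z^T *m th) (Z^T *m delta_mx i 0) -> th i 0 = alpha.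
Proof.
move=> C_gt0 ab opt grad_gt0.
have := dual_optimal_coord (c := alpha) i C_gt0 opt.
rewrite lexx ab => /(_ isT); rewrite pmulr_lge0 ?subr_gt0 // subr_ge0 => th_le.
by apply/eqP; rewrite eq_le th_le; case/andP: (opt.1 i).
Qed.

Lemma dual_optimal_at_upper (C : R) (th : 'cV[R]_l) (i : 'I_l) :
  0 < C -> alpha <= beta -> dual_optimal Z yb alpha beta C th ->
  C * dotv (Z^T *m th) (Z^T *m delta_mx i 0) < yb i 0 -> th i 0 = beta.
Proof.
move=> C_gt0 ab opt grad_lt0.
have := dual_optimal_coord (c := beta) i C_gt0 opt.
rewrite lexx ab => /(_ isT); rewrite nmulr_lge0 ?subr_lt0 // subr_le0 => le_th.
by apply/eqP; rewrite eq_le le_th andbT; case/andP: (opt.1 i).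
Qed.

Lemma dual_optimal_ball (C0 C : R) (th0 th : 'cV[R]_l) : 0 < C0 -> 0 < C ->
  dual_optimal Z yb alpha beta C0 th0 -> dual_optimal Z yb alpha beta C th ->
  normv (C *: (Z^T *m th) - ((C + C0) / 2) *: (Z^T *m th0))
    <= `|C - C0| / 2 * normv (Z^T *m th0).
Proof.
move=> C0_gt0 C_gt0 opt0 opt.
have := dual_optimal_variational C_gt0 opt opt0.1.
have := dual_optimal_variational C0_gt0 opt0 opt.1.
rewrite !mulmxBr !dotvBr (dotvC (Z^T *m th0)).
set u := Z^T *m th0; set v := Z^T *m th => vi0 vi.
have sq_le : normv (C *: v - ((C + C0) / 2) *: u) ^+ 2
             <= (`|C - C0| / 2 * normv u) ^+ 2.
  rewrite exprMn normv_sqr !normv_sqr expr_div_n real_normK ?num_real //.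
  rewrite !(dotvBl, dotvBr, dotvZl, dotvZr) (dotvC u v); nra.
by rewrite -ler_sqr ?nnegrE ?normv_ge0 // mulr_ge0 ?normv_ge0 // divr_ge0.
Qed.

End DualOptimality.

Lemma mulmx_trZmat_delta (R : realType) (l n : nat) (a : 'I_l -> R)
    (x : 'I_l -> 'cV[R]_n) (i : 'I_l) :
  (Zmat a x)^T *m delta_mx i 0 = a i *: x i.
Proof. by rewrite -colE; apply/matrixP => j k; rewrite !mxE (ord1 k). Qed.

Unset Implicit Arguments.

Theorem theorem3 (R : realType) (l n : nat) (hl : (0 < l)%N) (hn : (0 < n)%N)
  (x : 'I_l -> 'cV[R]_n) (y a b : 'I_l -> R)
  (phi : R -> R) (alpha beta : R)
  (phi_nonneg : forall t, 0 <= phi t)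
  (phi_nonconst : exists t1 t2, phi t1 <> phi t2)
  (phi_cont : continuous phi)
  (phi_sublin : sublinear phi)
  (phi_conj : conj_is_indicator phi alpha beta)
  (hab : alpha < beta)
  (C0 C : R) (hC0 : 0 < C0) (hC : C0 < C)
  (theta0 theta : 'cV[R]_l)
  (opt0 : dual_optimal (Zmat a x) (ybar b y) alpha beta C0 theta0)
  (opt : dual_optimal (Zmat a x) (ybar b y) alpha beta C theta)
  (i : 'I_l) :
  let u := (Zmat a x)^T *m theta0 in
  let axi := a i *: x i in
  ((C + C0) / 2 * dotv u axi - (C - C0) / 2 * normv u * normv axi > b i * y i ->
     theta i 0 = alpha) /\
  ((C + C0) / 2 * dotv u axi + (C - C0) / 2 * normv u * normv axi < b i * y i ->
     theta i 0 = beta).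
Proof.
move=> u axi.
have C_gt0 : 0 < C by lra.
have ab : alpha <= beta by rewrite ltW.
have ball := dual_optimal_ball hC0 C_gt0 opt0 opt.
rewrite gtr0_norm ?subr_gt0 // -/u in ball.
have := dotv_ball axi ball; rewrite !dotvZl => /ler_normlP[lo hi].
have yi : ybar b y i 0 = b i * y i by rewrite mxE.
split => screen.
- apply: (dual_optimal_at_lower C_gt0 ab opt).
  by rewrite mulmx_trZmat_delta yi; lra.
- apply: (dual_optimal_at_upper C_gt0 ab opt).
  by rewrite mulmx_trZmat_delta yi; lra.
Qed.
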